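(* Fix an integer $d\ge 1$ and let $n$ be the problem size. Let $\mathcal{L}$ be the oracle of a uniformly random $d$-Serial Simon's instance with target period $s=s_d$ (as defined in the context). Let $\mathcal{A}^{\mathcal{L}}=\Pi\circ U_{d+1}\circ\mathcal{L}\circ U_d\circ\cdots\circ\mathcal{L}\circ U_2\circ\mathcal{L}\circ U_1$ be any $\mathrm{QNC}_d$ circuit with oracle access to $\mathcal{L}$, acting on $\mathrm{poly}(n)$ qubits initialised to $|0\cdots0\rangle$, where each $U_j$ is a single-layer unitary (chosen independently of the oracle), each application of $\mathcal{L}$ may consist of polynomially many parallel queries, and $\Pi$ is a computational-basis measurement whose outcome is the output. Then $\Pr[s\leftarrow\mathcal{A}^{\mathcal{L}}]\le \mathrm{poly}(n)\cdot 2^{-n}$; in particular the success probability is negligible.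
   Context: A Simon function on $n$ bits is a pair $(f,s)$ with $s\in\{0,1\}^n\setminus\{0^n\}$ and $f:\{0,1\}^n\to\{0,1\}^n$ two-to-one such that $f(x)=f(y)\iff y\in\{x,x\oplus s\}$; ''uniformly random Simon function'' means $(f,s)$ is uniform over all such pairs. A single-layer unitary is a product of one- and two-qubit gates acting on pairwise disjoint qubits. The oracle of a function $F$ (possibly taking value $\perp$, encoded as a distinguished string of the response register) acts as $|x\rangle|a\rangle\mapsto|x\rangle|a\oplus F(x)\rangle$; oracle access to several functions means access to all of them (in parallel). $d$-Serial Simon's instance: sample independent uniformly random Simon functions $(f_i,s_i)$, $i=0,1,\dots,d$, on $n$ bits. Define $L_0(x,z)=f_0(x)$ and, for $1\le i\le d$, $L_i(x,z)=f_i(x)$ if $z=s_{i-1}$ and $L_i(x,z)=\perp$ otherwise (for $x,z\in\{0,1\}^n$). The oracle $\mathcal{L}$ is the oracle associated with $(L_0,\dots,L_d)$. The (search) problem is: given $\mathcal{L}$, output $s_d$. *)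

From HB Require Import structures.
From mathcomp Require Import all_boot all_order all_algebra.
From mathcomp Require Import complex reals.

Set Implicit Arguments.
Unset Strict Implicit.
Unset Printing Implicit Defensive.

Import Order.TTheory GRing.Theory Num.Theory.
Local Open Scope ring_scope.

Definition bits (k : nat) := {ffun 'I_k -> bool}.
Definition bzero (k : nat) : bits k := [ffun => false].
Definition bxor (k : nat) (a b : bits k) : bits k := [ffun i => addb (a i) (b i)].

Definition is_simon (n : nat) (f : {ffun bits n -> bits n}) (s : bits n) : bool :=
  (s != bzero n) &&
  [forall x : bits n, forall y : bits n, (f x == f y) == ((y == x) || (y == bxor x s))].

Definition instance (n d : nat) := {ffun 'I_d.+1 -> {ffun bits n -> bits n} * bits n}.
Definition valid_instance (n d : nat) (I : instance n d) : bool :=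
  [forall i, is_simon (I i).1 (I i).2].

(* L_i(x,z); None stands for the value \bot *)
Definition Lval (n d : nat) (I : instance n d) (i : 'I_d.+1) (x z : bits n)
  : option (bits n) :=
  if (i : nat) == 0%N then Some ((I i).1 x)
  else if z == (I (inord i.-1)).2 then Some ((I i).1 x) else None.

(* encoding of a response in an (n+1)-bit response register:
   y in {0,1}^n  ~>  0 y ,   \bot  ~>  1 0^n *)
Definition enc (n : nat) (r : option (bits n)) : bits n.+1 :=
  match r with
  | Some y => [ffun j => if unlift ord0 j is Some j' then y j' else false]
  | None => [ffun j => j == ord0]
  end.

Section Quantum.
Variable C : numClosedFieldType.
Variable m : nat.

(* states / operators on m qubits, in the computational basis *)
Definition qstate := bits m -> C.
Definition qop := bits m -> bits m -> C.

Definition apply_op (M : qop) (v : qstate) : qstate :=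
  fun y => \sum_(x : bits m) M y x * v x.
Definition mul_op (M N : qop) : qop :=
  fun y x => \sum_(z : bits m) M y z * N z x.
Definition id_op : qop := fun y x => (y == x)%:R.
Definition unitary (M : qop) : Prop :=
  forall y x, \sum_(z : bits m) (M z y)^* * M z x = (y == x)%:R.

(* a gate acts on the qubits of gsupp; gmat gives its matrix on the restriction
   of basis strings to gsupp (values on masked strings only are used) *)
Record gate := Gate { gsupp : {set 'I_m}; gmat : bits m -> bits m -> C }.

Definition agree_out (S : {set 'I_m}) (y x : bits m) : bool :=
  [forall i, (i \notin S) ==> (y i == x i)].
Definition maskS (S : {set 'I_m}) (x : bits m) : bits m :=
  [ffun i => (i \in S) && x i].
(* the operator gmat (x) identity *)
Definition gate_op (g : gate) : qop :=
  fun y x => if agree_out (gsupp g) y x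
             then gmat g (maskS (gsupp g) y) (maskS (gsupp g) x) else 0.
Definition valid_gate (g : gate) : Prop :=
  (0 < #|gsupp g| <= 2)%N /\ unitary (gate_op g).

Definition layer := seq gate.
Definition valid_layer (L : layer) : Prop :=
  foldr (fun g P => valid_gate g /\ P) True L /\
  pairwise (fun g h => [disjoint gsupp g & gsupp h]) L.
Definition layer_op (L : layer) : qop := foldr (fun g acc => mul_op (gate_op g) acc) id_op L.

Variables n d : nat.
(* one query to L_(qidx): input register (x,z) of 2n qubits, response register of n+1 qubits *)
Record query := Query { qidx : 'I_d.+1; qin : 'I_(n + n) -> 'I_m; qout : 'I_n.+1 -> 'I_m }.

Definition qsupp (q : query) : {set 'I_m} :=
  [set qin q j | j : 'I_(n + n)] :|: [set qout q j | j : 'I_n.+1].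
Definition valid_query (q : query) : bool :=
  [&& injectiveb (qin q), injectiveb (qout q) &
      [disjoint [set qin q j | j : 'I_(n + n)] & [set qout q j | j : 'I_n.+1]]].

Definition query_map (I : instance n d) (q : query) (w : bits m) : bits m :=
  let x : bits n := [ffun j => w (qin q (lshift n j))] in
  let z : bits n := [ffun j => w (qin q (rshift n j))] in
  let a := enc (Lval I (qidx q) x z) in
  [ffun i => if [pick j | qout q j == i] is Some j then addb (w i) (a j) else w i].
(* |x>|a> |-> |x>|a xor L(x)> *)
Definition query_op (I : instance n d) (q : query) : qop :=
  fun y x => (y == query_map I q x)%:R.

Definition olayer := seq query.
Definition valid_olayer (Q : olayer) : Prop :=
  all valid_query Q /\
  pairwise (fun q q' => [disjoint qsupp q & qsupp q']) Q.
Definition olayer_op (I : instance n d) (Q : olayer) : qop :=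
  foldr (fun q acc => mul_op (query_op I q) acc) id_op Q.

(* ---- QNC_d circuit with oracle access ----
   Pi o U_{d+1} o L o U_d o ... o L o U_1 ; cU ord0 = U_1, cU (lift ord0 j) = U_{j+2},
   cQ j = the (j+1)-th oracle application; the output is the measured n-qubit register cout *)
Record circuit := Circuit {
  cU : 'I_d.+1 -> layer;
  cQ : 'I_d -> olayer;
  cout : 'I_n -> 'I_m }.

Definition valid_circuit (c : circuit) : Prop :=
  (forall j, valid_layer (cU c j)) /\ (forall j, valid_olayer (cQ c j)) /\
  injective (cout c).

Definition init_state : qstate := fun x => (x == bzero m)%:R.

Definition final_state (c : circuit) (I : instance n d) : qstate :=
  foldl (fun v (j : 'I_d) =>
           apply_op (layer_op (cU c (lift ord0 j))) (apply_op (olayer_op I (cQ c j)) v))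
        (apply_op (layer_op (cU c ord0)) init_state) (enum 'I_d).

Definition success_prob (c : circuit) (I : instance n d) : C :=
  \sum_(w : bits m | [ffun j => w (cout c j)] == (I ord_max).2)
     `|final_state c I w| ^+ 2.

Definition avg_success (c : circuit) : C :=
  (\sum_(I : instance n d | valid_instance I) success_prob c I) /
  (#|[set I : instance n d | valid_instance I]|)%:R.

End Quantum.

From HB Require Import structures.
From mathcomp Require Import all_boot all_order all_algebra.
From mathcomp Require Import complex reals.
From Stdlib Require Import FunctionalExtensionality.
From mathcomp Require Import ring zify.
Import Order.TTheory GRing.Theory Num.Theory.
Local Open Scope ring_scope.
Set Implicit Arguments.
Unset Strict Implicit.

(* A hybrid argument.  In round t replace the oracle by the blinded oracle that
   answers \bot to every query to L_j with j > t.  The blinded run up to round t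
   depends only on the Simon functions with index < t, whereas the true and the
   blinded oracle differ only on inputs whose z-register equals s_(j-1) for some
   j > t.  Since s_(j-1) is uniform among the 2^n - 1 nonzero strings and
   independent of the blinded state, the expected weight of such inputs is at
   most (#queries) / (2^n - 1); the squared error at most doubles per round, so
   after d rounds the true final state is O(2^d d m / 2^n)-close to the blinded
   one, which is independent of s_d and therefore outputs s_d with probability
   at most 1 / (2^n - 1).  Independence is made precise by a symmetry: the
   transvections x |-> x + x_i u with u_i = 0 act on Simon instances and move any
   nonzero period to any other. *)

Lemma normD_sqr_le (C : numClosedFieldType) (x y : C) :
  `|x + y| ^+ 2 <= 2 * `|x| ^+ 2 + 2 * `|y| ^+ 2.
Proof.
rewrite -subr_ge0.
have -> : 2 * `|x| ^+ 2 + 2 * `|y| ^+ 2 - `|x + y| ^+ 2 = `|x - y| ^+ 2.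
  by rewrite !normCK !rmorphD !rmorphN /=; ring.
exact: exprn_ge0.
Qed.

Lemma eq_has_all (T : Type) (P a1 a2 : pred T) s :
  all P s -> {in P, a1 =1 a2} -> has a1 s = has a2 s.
Proof. by move=> + a12; elim: s => //= x s IH /andP [Px Ps]; rewrite a12 // IH. Qed.

Lemma has_le_sum (R : numDomainType) (T : Type) (p : pred T) s :
  (has p s)%:R <= \sum_(x <- s) (p x)%:R :> R.
Proof.
elim: s => [|x s IH] /=; first by rewrite big_nil.
rewrite big_cons; case: (p x) => /=; last by rewrite add0r.
by rewrite lerDl sumr_ge0 // => i _; rewrite ler0n.
Qed.

Lemma foldl_map (A B T : Type) (f : A -> B -> A) (h : T -> B) z s :
  foldl f z (map h s) = foldl (fun z x => f z (h x)) z s.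
Proof. by elim: s z => //= x s IH z. Qed.

Lemma sum_seq_le (R : numDomainType) (T : Type) (s : seq T) (F : T -> R) (K : R) :
  (forall x, F x <= K) -> \sum_(x <- s) F x <= (size s)%:R * K.
Proof.
move=> FK; elim: s => [|x s IH]; first by rewrite big_nil mul0r.
by rewrite big_cons /= -addn1 natrD mulrDl mul1r addrC lerD.
Qed.

Lemma big_mkcond_natl (R : numDomainType) (T : finType) (P : pred T) (F : T -> R) :
  \sum_(w | P w) F w = \sum_w (P w)%:R * F w.
Proof. by rewrite big_mkcond; apply: eq_bigr => w _; rewrite mulr_natl mulrb. Qed.

Section StateNorm.
Variables (C : numClosedFieldType) (m : nat).
Implicit Types (M N : qop C m) (u v : qstate C m).

Definition sqnorm v : C := \sum_w `|v w| ^+ 2.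
Definition state_sub u v : qstate C m := fun w => u w - v w.

Lemma sqnorm_ge0 v : 0 <= sqnorm v.
Proof. by apply: sumr_ge0 => w _; rewrite exprn_ge0. Qed.

Lemma sqnormD_le u v :
  sqnorm (fun w => u w + v w) <= 2 * sqnorm u + 2 * sqnorm v.
Proof.
rewrite /sqnorm !mulr_sumr -big_split /=.
by apply: ler_sum => w _; apply: normD_sqr_le.
Qed.

Lemma sqnorm_perm (p : bits m -> bits m) v : injective p ->
  sqnorm (fun w => v (p w)) = sqnorm v.
Proof. by move=> p_inj; rewrite /sqnorm [RHS](reindex_inj p_inj). Qed.

Lemma apply_opB M u v :
  apply_op M (state_sub u v) = state_sub (apply_op M u) (apply_op M v).
Proof.
apply: functional_extensionality => y.
by rewrite /apply_op /state_sub -sumrB; apply: eq_bigr => x _; rewrite mulrBr.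
Qed.

Lemma apply_mul_op M N v : apply_op (mul_op M N) v = apply_op M (apply_op N v).
Proof.
apply: functional_extensionality => y.
rewrite /apply_op /mul_op; under eq_bigr do rewrite mulr_suml.
rewrite exchange_big /=; apply: eq_bigr => z _.
by rewrite mulr_sumr; apply: eq_bigr => x _; rewrite mulrA.
Qed.

Lemma apply_id_op v : apply_op (@id_op C m) v = v.
Proof.
apply: functional_extensionality => y.
rewrite /apply_op /id_op (bigD1 y) //= eqxx mul1r big1 ?addr0 //.
by move=> x /negbTE; rewrite eq_sym => ->; rewrite mul0r.
Qed.

Lemma sqnorm_unitary M v : unitary M -> sqnorm (apply_op M v) = sqnorm v.
Proof.
move=> uM; rewrite /sqnorm /apply_op.
under eq_bigr do rewrite normCKC rmorph_sum /= mulr_suml.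
under eq_bigr do under eq_bigr do rewrite mulr_sumr.
rewrite exchange_big /=; under eq_bigr do rewrite exchange_big /=.
apply: eq_bigr => x _.
transitivity (\sum_(x' : bits m) (v x)^* * v x' * (x == x')%:R).
  apply: eq_bigr => x' _; rewrite -uM mulr_sumr; apply: eq_bigr => y _.
  by rewrite rmorphM /=; ring.
rewrite (bigD1 x) //= eqxx mulr1 big1 ?addr0 ?normCKC //.
by move=> x' /negbTE; rewrite eq_sym => ->; rewrite mulr0.
Qed.

Lemma sqnorm_layer (L : layer C m) v : valid_layer L ->
  sqnorm (apply_op (layer_op L) v) = sqnorm v.
Proof.
case=> + _; elim: L => [|g L IH] /=; first by rewrite apply_id_op.
by case=> [[_ ug] vL]; rewrite apply_mul_op sqnorm_unitary // IH.
Qed.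

Lemma sqnorm_init : sqnorm (@init_state C m) = 1.
Proof.
rewrite /sqnorm (bigD1 (bzero m)) //= /init_state eqxx normr1 expr1n big1 ?addr0 //.
by move=> w /negbTE ->; rewrite normr0 expr0n.
Qed.

End StateNorm.

Section OracleLayer.
Variables (C : numClosedFieldType) (m n d : nat).
Local Notation query := (query m n d).
Local Notation olayer := (olayer m n d).
Implicit Types (q : query) (Q : olayer) (w y : bits m) (v : qstate C m).

Definition oracle := 'I_d.+1 -> bits n -> bits n -> option (bits n).
Implicit Types F G : oracle.

Definition query_x q w : bits n := [ffun j => w (qin q (lshift n j))].
Definition query_z q w : bits n := [ffun j => w (qin q (rshift n j))].
Definition query_answer F q w := F (qidx q) (query_x q w) (query_z q w).

Definition oracle_map F q w : bits m :=
  let a := enc (query_answer F q w) in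
  [ffun i => if [pick j | qout q j == i] is Some j then addb (w i) (a j) else w i].

Lemma query_mapE (I : instance n d) q : query_map I q = oracle_map (Lval I) q.
Proof. by []. Qed.

Definition in_out_disjoint q q' :=
  [disjoint [set qin q j | j : 'I_(n + n)] & [set qout q' j | j : 'I_n.+1]].

Definition noninterfering Q := allrel in_out_disjoint Q Q.

Lemma qsupp_in_out_disjoint q q' :
  [disjoint qsupp q & qsupp q'] -> in_out_disjoint q q'.
Proof. by apply: disjointW; rewrite /qsupp ?subsetUl ?subsetUr. Qed.

Lemma valid_olayer_noninterfering Q : valid_olayer Q -> noninterfering Q.
Proof.
case; elim: Q => [|q Q IH] //= /andP [vq vQ] /andP [dqQ pQ].
rewrite /noninterfering allrel_cons2; apply/and4P; split.
- by case/and3P: vq.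
- by apply: sub_all dqQ => q'; apply: qsupp_in_out_disjoint.
- by apply: sub_all dqQ => q' dq; rewrite qsupp_in_out_disjoint // disjoint_sym.
- exact: IH.
Qed.

Lemma valid_olayer_size Q : valid_olayer Q -> (size Q <= m)%N.
Proof.
case=> _ pQ; pose out0 q := qout q ord0.
have out0_qsupp q : out0 q \in qsupp q.
  by rewrite inE; apply/orP; right; apply/imsetP; exists ord0.
have out0_uniq : uniq (map out0 Q).
  rewrite uniq_pairwise pairwise_map; apply: sub_pairwise pQ => q q' dqq' /=.
  by apply/eqP => qq'; move: (out0_qsupp q'); rewrite -qq' (disjointFr dqq').
have := uniq_leq_size out0_uniq (s2 := enum 'I_m) (fun x _ => mem_enum _ x).
by rewrite size_map size_enum_ord.
Qed.

Lemma oracle_map_in F q q' w k :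
  in_out_disjoint q q' -> oracle_map F q' w (qin q k) = w (qin q k).
Proof.
move=> dqq'; rewrite /oracle_map ffunE; case: pickP => // j /eqP qjk.
have inq : qin q k \in [set qin q j | j : 'I_(n + n)] by apply/imsetP; exists k.
have outq' : qin q k \in [set qout q' j | j : 'I_n.+1] by apply/imsetP; exists j.
by rewrite (disjointFr dqq' inq) in outq'.
Qed.

Lemma query_x_oracle_map F q q' w :
  in_out_disjoint q q' -> query_x q (oracle_map F q' w) = query_x q w.
Proof. by move=> dqq'; apply/ffunP => j; rewrite ffunE oracle_map_in // ffunE. Qed.

Lemma query_z_oracle_map F q q' w :
  in_out_disjoint q q' -> query_z q (oracle_map F q' w) = query_z q w.
Proof. by move=> dqq'; apply/ffunP => j; rewrite ffunE oracle_map_in // ffunE. Qed.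

Lemma query_answer_oracle_map F G q q' w : in_out_disjoint q q' ->
  query_answer F q (oracle_map G q' w) = query_answer F q w.
Proof.
by move=> dqq'; rewrite /query_answer query_x_oracle_map ?query_z_oracle_map.
Qed.

Lemma oracle_mapK F q : in_out_disjoint q q -> involutive (oracle_map F q).
Proof.
move=> dqq w; apply/ffunP => i.
rewrite {1}/oracle_map ffunE query_answer_oracle_map // /oracle_map ffunE.
by case: pickP => [j _|//]; rewrite -addbA addbb addbF.
Qed.

Lemma apply_query_op (I : instance n d) q v : in_out_disjoint q q ->
  apply_op (query_op C I q) v = fun y => v (query_map I q y).
Proof.
move=> dqq; apply: functional_extensionality => y.
have K := oracle_mapK (Lval I) dqq.
rewrite /apply_op /query_op (bigD1 (query_map I q y)) //= query_mapE K eqxx mul1r.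
rewrite big1 ?addr0 // => x /negbTE xNqy.
by rewrite -(can_eq K) K eq_sym xNqy mul0r.
Qed.

Fixpoint oracle_perm F Q y : bits m :=
  if Q is q :: Q' then oracle_perm F Q' (oracle_map F q y) else y.

Definition oracle_act F Q v : qstate C m := fun y => v (oracle_perm F Q y).

Lemma oracle_perm_inj F Q : noninterfering Q -> injective (oracle_perm F Q).
Proof.
elim: Q => [|q Q IH] /=; first by move=> _ x y.
rewrite /noninterfering allrel_cons2 => /and4P [dqq _ _ nQ] x y /(IH nQ).
exact: (can_inj (oracle_mapK F dqq)).
Qed.

Lemma apply_olayer_op (I : instance n d) Q v : noninterfering Q ->
  apply_op (olayer_op C I Q) v = oracle_act (Lval I) Q v.
Proof.
elim: Q v => [|q Q IH] v /=; first by rewrite apply_id_op.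
rewrite /noninterfering allrel_cons2 => /and4P [dqq _ _ nQ].
by rewrite apply_mul_op IH // apply_query_op.
Qed.

Lemma sqnorm_oracle_act F Q v :
  noninterfering Q -> sqnorm (oracle_act F Q v) = sqnorm v.
Proof. by move=> nQ; apply/sqnorm_perm/oracle_perm_inj. Qed.

Definition oracles_differ F G q w := query_answer F q w != query_answer G q w.

Lemma oracles_differ_perm F G H q Q w : all (in_out_disjoint q) Q ->
  oracles_differ F G q (oracle_perm H Q w) = oracles_differ F G q w.
Proof.
elim: Q w => [|q' Q IH] w //= /andP [dqq' dqQ].
by rewrite IH // /oracles_differ !query_answer_oracle_map.
Qed.

Lemma oracle_perm_agree F G Q y : noninterfering Q ->
  ~~ has (fun q => oracles_differ F G q y) Q -> oracle_perm F Q y = oracle_perm G Q y.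
Proof.
elim: Q y => [|q Q IH] y //=.
rewrite /noninterfering allrel_cons2 => /and4P [_ _ dQq nQ].
rewrite negb_or => /andP [/negPn /eqP Fq_Gq nQy].
rewrite {2}/oracle_map -Fq_Gq; apply: IH => //.
rewrite -(eq_has_all (a1 := fun q' => oracles_differ F G q' y) dQq) // => q' dq'q.
by rewrite /oracles_differ !query_answer_oracle_map.
Qed.

(* Both permutations preserve the set of basis states at which some query sees
   different answers, and they agree outside it. *)
Lemma sqnorm_oracle_actB_le F G Q v : noninterfering Q ->
  sqnorm (state_sub (oracle_act F Q v) (oracle_act G Q v)) <=
  4 * \sum_(q <- Q) \sum_w (oracles_differ F G q w)%:R * `|v w| ^+ 2.
Proof.
move=> nQ; pose hit y := has (fun q => oracles_differ F G q y) Q.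
have hit_perm H y : hit (oracle_perm H Q y) = hit y.
  apply: (eq_has_all (P := fun q => all (in_out_disjoint q) Q)) => [|q dqQ].
    by move: nQ; rewrite /noninterfering /allrel.
  exact: oracles_differ_perm.
have hit_mass H : \sum_y (hit y)%:R * (2 * `|v (oracle_perm H Q y)| ^+ 2) =
                  2 * \sum_w (hit w)%:R * `|v w| ^+ 2 :> C.
  rewrite [in RHS](reindex_inj (oracle_perm_inj (F := H) nQ)) mulr_sumr.
  by apply: eq_bigr => y _; rewrite hit_perm mulrCA.
apply: le_trans (_ : \sum_y (hit y)%:R * (2 * `|v (oracle_perm F Q y)| ^+ 2 +
                    2 * `|v (oracle_perm G Q y)| ^+ 2) <= _).
  apply: ler_sum => y _; rewrite /state_sub /oracle_act.
  have [hy|hy] := boolP (hit y).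
    by rewrite mul1r -(normrN (v (oracle_perm G Q y))) normD_sqr_le.
  by rewrite (oracle_perm_agree nQ hy) subrr normr0 expr0n mul0r.
under eq_bigr do rewrite mulrDr.
rewrite big_split /= !hit_mass -mulrDl -natrD ler_wpM2l // exchange_big /=.
by apply: ler_sum => w _; rewrite -mulr_suml ler_wpM2r ?exprn_ge0 ?has_le_sum.
Qed.

End OracleLayer.

Section SimonSymmetry.
Variables (C : numClosedFieldType) (n d : nat).
Implicit Types (u x y z : bits n) (I : instance n d).

Definition transvect (i : 'I_n) u x : bits n := [ffun l => addb (x l) (x i && u l)].

Lemma transvectK i u : u i = false -> involutive (transvect i u).
Proof.
move=> ui x; apply/ffunP => l; rewrite !ffunE ui andbF addbF.
by rewrite -addbA addbb addbF.
Qed.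

Lemma transvect_bxor i u x y :
  transvect i u (bxor x y) = bxor (transvect i u x) (transvect i u y).
Proof.
apply/ffunP => l; rewrite !ffunE.
by case: (x i); case: (y i); case: (x l); case: (y l); case: (u l).
Qed.

Lemma transvect0 i u : transvect i u (bzero n) = bzero n.
Proof. by apply/ffunP => l; rewrite !ffunE. Qed.

Lemma simon_transvect i u f s : u i = false -> is_simon f s ->
  is_simon [ffun x => f (transvect i u x)] (transvect i u s).
Proof.
move=> ui /andP [s0 /forallP simon_f]; have K := transvectK ui.
apply/andP; split.
  by apply: contra s0 => /eqP s0; rewrite -(K s) s0 transvect0.
apply/forallP => x; apply/forallP => y; rewrite !ffunE.
move: (simon_f (transvect i u x)) => /forallP /(_ (transvect i u y)).
have -> : bxor (transvect i u x) s = transvect i u (bxor x (transvect i u s)).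
  by rewrite transvect_bxor K.
by rewrite !(can_eq K).
Qed.

Definition transvect_instance (k : 'I_d.+1) i u I : instance n d :=
  [ffun l => if l == k then ([ffun x => (I l).1 (transvect i u x)],
                             transvect i u (I l).2)
             else I l].

Lemma transvect_instanceK k i u : u i = false -> involutive (transvect_instance k i u).
Proof.
move=> ui I; have K := transvectK ui; apply/ffunP => l; rewrite !ffunE.
case: eqP => [->|//] /=; rewrite K.
by case: (I k) => f s /=; congr pair; apply/ffunP => x; rewrite !ffunE K.
Qed.

Lemma valid_transvect_instance k i u I : u i = false ->
  valid_instance (transvect_instance k i u I) = valid_instance I.
Proof.
move=> ui; suff valid_tr J : valid_instance J ->
    valid_instance (transvect_instance k i u J).
  apply/idP/idP; last exact: valid_tr.
  by move/valid_tr; rewrite transvect_instanceK.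
move=> /forallP validJ; apply/forallP => l; rewrite ffunE.
by case: eqP => _ //=; apply: simon_transvect.
Qed.

Definition period_sum (k : 'I_d.+1) (X : instance n d -> C) z : C :=
  \sum_(I | valid_instance I) ((I k).2 == z)%:R * X I.

Definition indep_of (k : 'I_d.+1) (X : instance n d -> C) :=
  forall I I', (forall l, l != k -> I l = I' l) -> X I = X I'.

Lemma period_sum_transvect k X i u z : indep_of k X -> u i = false ->
  period_sum k X z = period_sum k X (transvect i u z).
Proof.
move=> indepX ui; have K := transvectK ui; rewrite /period_sum.
rewrite (reindex_inj (can_inj (transvect_instanceK k ui))) /=.
apply: eq_big => I; first by rewrite valid_transvect_instance.
move=> _; rewrite ffunE eqxx /= -{1}(K z) (can_eq K); congr (_ * _).
by apply: indepX => l lNk; rewrite ffunE (negbTE lNk).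
Qed.

(* For z, z' sharing a set bit i, the transvection with u = z + z' maps z to z'. *)
Lemma period_sum_share_bit k X z z' i : indep_of k X -> z i -> z' i ->
  period_sum k X z = period_sum k X z'.
Proof.
move=> indepX zi z'i; set u := bxor z z'.
have ui : u i = false by rewrite ffunE zi z'i.
rewrite (period_sum_transvect z indepX ui); congr period_sum.
by apply/ffunP => l; rewrite !ffunE zi /= addbA addbb.
Qed.

Lemma bits_neq0 z : z != bzero n -> exists i, z i.
Proof.
move=> z0; case: (pickP (fun i => z i)) => [i zi|zF]; first by exists i.
by case/eqP: z0; apply/ffunP => l; rewrite !ffunE zF.
Qed.

Lemma period_sum_const k X z z' : indep_of k X -> z != bzero n -> z' != bzero n ->
  period_sum k X z = period_sum k X z'.
Proof.
move=> indepX /bits_neq0 [i zi] /bits_neq0 [j z'j].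
pose e : bits n := [ffun l => (l == i) || (l == j)].
rewrite (@period_sum_share_bit k X z e i) ?ffunE ?eqxx //.
by apply: (@period_sum_share_bit k X e z' j); rewrite ?ffunE ?eqxx ?orbT.
Qed.

Lemma card_bits : #|bits n| = (2 ^ n)%N.
Proof. by rewrite card_ffun card_bool card_ord. Qed.

Lemma period_sum_avg k X z : indep_of k X -> (forall I, 0 <= X I) ->
  ((2 ^ n).-1)%:R * period_sum k X z <= \sum_(I | valid_instance I) X I.
Proof.
move=> indepX X_ge0.
have sum0 : period_sum k X (bzero n) = 0.
  rewrite /period_sum big1 // => I /forallP /(_ k) /andP [s0 _].
  by rewrite (negbTE s0) mul0r.
have [->|z0] := eqVneq z (bzero n); first by rewrite sum0 mulr0 sumr_ge0.
have -> : \sum_(I | valid_instance I) X I = \sum_z' period_sum k X z'.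
  rewrite /period_sum exchange_big /=; apply: eq_bigr => I _.
  rewrite (bigD1 (I k).2) //= eqxx mul1r big1 ?addr0 // => z' z'Nk.
  by rewrite eq_sym (negbTE z'Nk) mul0r.
rewrite (bigD1 (bzero n)) //= sum0 add0r.
rewrite (eq_bigr (fun _ => period_sum k X z)); last first.
  by move=> z' z'0; apply: period_sum_const.
rewrite sumr_const mulr_natl.
suff -> : #|[pred z' | z' != bzero n]| = (2 ^ n).-1 by [].
by rewrite -card_bits -(cardC1 (bzero n)); apply: eq_card.
Qed.

End SimonSymmetry.

Section Hybrid.
Variables (C : numClosedFieldType) (m n d : nat) (c : circuit C m n d).
Hypothesis c_valid : valid_circuit c.
Implicit Types (I : instance n d) (t T : nat) (q : query m n d) (w : bits m).

Definition round_queries t : olayer m n d :=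
  if insub t is Some j then cQ c j else [::].
Definition round_layer t : layer C m := cU c (inord t).

Lemma round_queriesE (j : 'I_d) : round_queries j = cQ c j.
Proof. by rewrite /round_queries valK. Qed.

Lemma noninterfering_round t : noninterfering (round_queries t).
Proof.
rewrite /round_queries; case: insub => [j|//].
by apply: valid_olayer_noninterfering; case: c_valid => _ [].
Qed.

Lemma size_round_queries t : (size (round_queries t) <= m)%N.
Proof.
rewrite /round_queries; case: insub => [j|//].
by apply: valid_olayer_size; case: c_valid => _ [].
Qed.

Lemma valid_round_layer t : valid_layer (round_layer t).
Proof. by case: c_valid => valid_U _; apply: valid_U. Qed.

Fixpoint run (Fs : nat -> oracle n d) T : qstate C m :=
  if T is t.+1 then
    apply_op (layer_op (round_layer t.+1)) (oracle_act (Fs t) (round_queries t) (run Fs t))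
  else apply_op (layer_op (cU c ord0)) (@init_state C m).

Lemma final_state_run I : final_state c I = run (fun _ => Lval I) d.
Proof.
pose step v t := apply_op (layer_op (round_layer t.+1))
                          (oracle_act (Lval I) (round_queries t) v).
have stepE : (fun v (j : 'I_d) => apply_op (layer_op (cU c (lift ord0 j)))
                 (apply_op (olayer_op C I (cQ c j)) v)) = fun v j => step v (val j).
  apply: functional_extensionality => v; apply: functional_extensionality => j.
  rewrite /step round_queriesE apply_olayer_op; last first.
    by rewrite -round_queriesE noninterfering_round.
  rewrite /round_layer; congr (apply_op (layer_op (cU c _)) _).
  by apply: val_inj; rewrite /= inordK // ltnS.
have run_iota T : foldl step (run (fun=> Lval I) 0) (iota 0 T) = run (fun=> Lval I) T.
  by elim: T => [|T IH] //; rewrite -addn1 iotaD foldl_cat IH /= add0n addn1.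
by rewrite /final_state stepE -(foldl_map step val) val_enum_ord run_iota.
Qed.

Lemma sqnorm_run Fs T : sqnorm (run Fs T) = 1.
Proof.
elim: T => [|T IH] /=.
  by rewrite sqnorm_layer ?sqnorm_init //; case: c_valid => valid_U _; apply: valid_U.
rewrite sqnorm_layer; last exact: valid_round_layer.
by rewrite sqnorm_oracle_act // noninterfering_round.
Qed.

Definition blind I t : oracle n d :=
  fun j x z => if (j <= t)%N then Lval I j x z else None.

Lemma blind_dep I I' t : (forall l : 'I_d.+1, (l <= t)%N -> I l = I' l) ->
  blind I t = blind I' t.
Proof.
move=> II'; apply: functional_extensionality => j.
apply: functional_extensionality => x; apply: functional_extensionality => z.
rewrite /blind; case: leqP => // jt; rewrite /Lval (II' j jt) (II' (inord j.-1)) //.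
by rewrite inordK ?(leq_trans (leq_pred j) jt) // (leq_ltn_trans (leq_pred j)).
Qed.

Lemma run_blind_dep I I' T : (forall l : 'I_d.+1, (l < T)%N -> I l = I' l) ->
  run (blind I) T = run (blind I') T.
Proof.
elim: T => [|T IH] II' //=.
by rewrite (@blind_dep I I' T) ?IH // => l lT; apply: II' => //; apply: ltnW.
Qed.

Definition hybrid_gap I T : qstate C m :=
  state_sub (run (fun _ => Lval I) T) (run (blind I) T).

Definition round_gap I t : C :=
  let v := run (blind I) t in
  sqnorm (state_sub (oracle_act (Lval I) (round_queries t) v)
                    (oracle_act (blind I t) (round_queries t) v)).

Lemma sqnorm_hybrid_gap_step I T :
  sqnorm (hybrid_gap I T.+1) <= 2 * sqnorm (hybrid_gap I T) + 2 * round_gap I T.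
Proof.
rewrite /hybrid_gap /= -apply_opB sqnorm_layer; last exact: valid_round_layer.
set r := run _ T; set b := run _ T; set Q := round_queries T.
have -> : state_sub (oracle_act (Lval I) Q r) (oracle_act (blind I T) Q b) =
   fun w => oracle_act (Lval I) Q (state_sub r b) w +
            state_sub (oracle_act (Lval I) Q b) (oracle_act (blind I T) Q b) w.
  by apply: functional_extensionality => w; rewrite /state_sub /oracle_act; ring.
apply: le_trans (sqnormD_le _ _) _.
by rewrite sqnorm_oracle_act // noninterfering_round.
Qed.

Lemma sqnorm_hybrid_gap_le I T :
  sqnorm (hybrid_gap I T) <= 2 ^+ T * \sum_(t < T) round_gap I t.
Proof.
elim: T => [|T IH].
  rewrite /hybrid_gap /sqnorm big1 ?big_ord0 ?mulr0 // => w _.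
  by rewrite /state_sub subrr normr0 expr0n.
apply: le_trans (sqnorm_hybrid_gap_step I T) _.
rewrite big_ord_recr /= exprS -mulrA !mulrDr lerD ?ler_wpM2l //.
by rewrite ler_peMl ?sqnorm_ge0 // exprn_ege1 // ler1n.
Qed.

Lemma blind_differ I t q w : oracles_differ (Lval I) (blind I t) q w ->
  (t < qidx q)%N && (query_z q w == (I (inord (qidx q).-1)).2).
Proof.
rewrite /oracles_differ /query_answer /blind; case: leqP => [_|tq]; first by rewrite eqxx.
rewrite /Lval ifN; last by rewrite -lt0n (leq_ltn_trans _ tq).
by case: ifP.
Qed.

Local Notation ninst := (\sum_(I : instance n d | valid_instance I) (1 : C)).
Local Notation npos := (((2 ^ n).-1)%:R : C).

Lemma sum_sqr_run_blind t :
  \sum_w \sum_(I | valid_instance I) `|run (blind I) t w| ^+ 2 = ninst.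
Proof.
rewrite exchange_big /=; apply: eq_bigr => I _.
by have := sqnorm_run (blind I) t; rewrite /sqnorm.
Qed.

(* The blinded state before round [t] is independent of s_(j-1) for every j > t,
   and a query to L_j is answered differently only when its z-register is s_(j-1). *)
Lemma avg_query_gap_le t q :
  npos * \sum_(I | valid_instance I)
           \sum_w (oracles_differ (Lval I) (blind I t) q w)%:R * `|run (blind I) t w| ^+ 2
  <= ninst.
Proof.
have [qt|tq] := leqP (qidx q) t.
  rewrite big1 ?mulr0 ?sumr_ge0 ?ler01 // => I _; rewrite big1 // => w _.
  case: (boolP (oracles_differ _ _ _ _)) => [/blind_differ|_]; last by rewrite mul0r.
  by rewrite ltnNge qt.
set k : 'I_d.+1 := inord (qidx q).-1.
have kE : (k : nat) = (qidx q).-1 by rewrite inordK // (leq_ltn_trans (leq_pred _)).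
pose X w I := `|run (blind I) t w| ^+ 2.
apply: le_trans (_ : npos * \sum_w period_sum k (X w) (query_z q w) <= _).
  rewrite ler_wpM2l ?ler0n // /period_sum exchange_big /=.
  apply: ler_sum => w _; apply: ler_sum => I _; rewrite ler_wpM2r ?exprn_ge0 //.
  case: (boolP (oracles_differ _ _ _ _)) => [/blind_differ|_]; last by rewrite ler0n.
  by rewrite tq eq_sym => /= ->.
rewrite -(sum_sqr_run_blind t) mulr_sumr; apply: ler_sum => w _.
apply: period_sum_avg => [I I' II'|I]; last exact: exprn_ge0.
rewrite /X (@run_blind_dep I I') // => l lt; apply: II'.
by apply: contraTneq lt => ->; rewrite kE; lia.
Qed.

Lemma avg_round_gap_le t :
  npos * \sum_(I | valid_instance I) round_gap I t <= 4 * m%:R * ninst.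
Proof.
pose mass I q := \sum_w (oracles_differ (Lval I) (blind I t) q w)%:R *
                        `|run (blind I) t w| ^+ 2.
apply: le_trans (_ : npos * (4 * \sum_(q <- round_queries t)
                       \sum_(I | valid_instance I) mass I q) <= _).
  rewrite ler_wpM2l ?ler0n // [\sum_(q <- _) _]exchange_big /= mulr_sumr.
  apply: ler_sum => I _; apply: sqnorm_oracle_actB_le; exact: noninterfering_round.
rewrite mulrCA mulr_sumr -mulrA ler_wpM2l //.
apply: le_trans (sum_seq_le _ (avg_query_gap_le t)) _.
by rewrite ler_wpM2r ?sumr_ge0 ?ler_nat ?size_round_queries // => I _; rewrite ler01.
Qed.

Definition hits_period I w := [ffun j => w (cout c j)] == (I ord_max).2.

(* The blinded final state does not depend on s_d. *)
Lemma avg_blind_success_le :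
  npos * \sum_(I | valid_instance I) \sum_(w | hits_period I w) `|run (blind I) d w| ^+ 2
  <= ninst.
Proof.
under eq_bigr do rewrite big_mkcond_natl.
rewrite exchange_big /= -(sum_sqr_run_blind d) mulr_sumr; apply: ler_sum => w _.
rewrite /hits_period; under eq_bigr do rewrite eq_sym.
apply: (period_sum_avg (k := ord_max) (X := fun I => `|run (blind I) d w| ^+ 2)).
  move=> I I' II'; rewrite (@run_blind_dep I I') // => l ld; apply: II'.
  by rewrite -val_eqE /= neq_ltn ld.
by move=> I; apply: exprn_ge0.
Qed.

Lemma success_prob_le I :
  success_prob c I <= 2 * \sum_(w | hits_period I w) `|run (blind I) d w| ^+ 2 +
                      2 * (2 ^+ d * \sum_(t < d) round_gap I t).
Proof.
rewrite /success_prob final_state_run.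
apply: le_trans (_ : \sum_(w | hits_period I w) (2 * `|run (blind I) d w| ^+ 2 +
                        2 * `|hybrid_gap I d w| ^+ 2) <= _).
  apply: ler_sum => w _.
  have -> : run (fun _ => Lval I) d w = run (blind I) d w + hybrid_gap I d w.
    by rewrite /hybrid_gap /state_sub addrC subrK.
  exact: normD_sqr_le.
rewrite big_split /= -!mulr_sumr lerD // ler_wpM2l //.
apply: le_trans (sqnorm_hybrid_gap_le I d).
rewrite /sqnorm [X in _ <= X](bigID (hits_period I)) /= lerDl.
by apply: sumr_ge0 => w _; apply: exprn_ge0.
Qed.

Lemma sum_success_prob_le :
  npos * \sum_(I | valid_instance I) success_prob c I <=
  ninst * (2 + 8 * 2 ^ d * d * m)%:R.
Proof.
apply: le_trans (_ : npos * \sum_(I | valid_instance I)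
   (2 * \sum_(w | hits_period I w) `|run (blind I) d w| ^+ 2 +
    2 * (2 ^+ d * \sum_(t < d) round_gap I t)) <= _).
  by rewrite ler_wpM2l ?ler0n //; apply: ler_sum => I _; apply: success_prob_le.
rewrite big_split /= mulrDr -!mulr_sumr natrD mulrDr [ninst * _]mulrC.
apply: lerD; first by rewrite mulrCA ler_wpM2l // avg_blind_success_le.
have gap_le : npos * \sum_(I | valid_instance I) \sum_(t < d) round_gap I t
              <= d%:R * (4 * m%:R * ninst).
  rewrite exchange_big /= mulr_sumr.
  apply: le_trans (_ : \sum_(t < d) (4 * m%:R * ninst) <= _).
    by apply: ler_sum => t _; apply: avg_round_gap_le.
  by rewrite sumr_const card_ord [d%:R * _]mulr_natl.
rewrite mulrCA [npos * _]mulrCA.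
have -> : ninst * (8 * 2 ^ d * d * m)%:R = 2 * (2 ^+ d * (d%:R * (4 * m%:R * ninst))).
  by rewrite !natrM natrX; ring.
by rewrite ler_wpM2l // ler_wpM2l ?exprn_ge0.
Qed.

End Hybrid.

Lemma pow2_le_double_pred n : (1 <= n)%N -> (2 ^ n <= 2 * (2 ^ n).-1)%N.
Proof.
move=> n1; have : (2 <= 2 ^ n)%N by rewrite -{1}(expn1 2) leq_exp2l.
by rewrite -{1 2}(prednK (expn_gt0 2 n)); lia.
Qed.

Lemma ratio_le_pow2 (R : numFieldType) (S N : R) (K P n : nat) :
  (1 <= n)%N -> (2 * K <= P)%N -> 0 <= N ->
  ((2 ^ n).-1)%:R * S <= N * K%:R -> S / N <= P%:R / 2%:R ^+ n.
Proof.
move=> n1 KP N0 SN; have pow_gt0 : (0 : R) < 2%:R ^+ n by rewrite exprn_gt0.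
have [->|N_neq0] := eqVneq N 0; first by rewrite invr0 mulr0 divr_ge0 ?ler0n ?ltW.
have N_gt0 : 0 < N by rewrite lt0r N_neq0.
have npos_gt0 : (0 : R) < ((2 ^ n).-1)%:R.
  by rewrite ltr0n -ltnS prednK ?expn_gt0 // -{1}(expn0 2) ltn_exp2l.
rewrite ler_pdivrMr // mulrAC ler_pdivlMr // -(ler_pM2l npos_gt0) mulrA.
apply: le_trans (ler_wpM2r (ltW pow_gt0) SN) _.
have -> : ((2 ^ n).-1)%:R * (P%:R * N) = N * (P * (2 ^ n).-1)%:R :> R.
  by rewrite natrM; ring.
rewrite -mulrA -natrX -natrM ler_wpM2l // ler_nat.
have := pow2_le_double_pred n1; nia.
Qed.

Lemma avg_success_le (C : numClosedFieldType) m n d (c : circuit C m n d) (P : nat) :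
  valid_circuit c -> (1 <= n)%N -> (2 * (2 + 8 * 2 ^ d * d * m) <= P)%N ->
  avg_success c <= P%:R / 2%:R ^+ n.
Proof.
move=> c_valid n1 KP; rewrite /avg_success.
have -> : (#|[set I : instance n d | valid_instance I]|)%:R =
          \sum_(I : instance n d | valid_instance I) (1 : C).
  by rewrite sumr_const; congr (_ *+ _); apply: eq_card => I; rewrite inE.
apply: ratio_le_pow2 n1 KP _ (sum_success_prob_le c_valid).
by apply: sumr_ge0 => I _; apply: ler01.
Qed.

Lemma poly_bound_arith n a K m : (1 <= n)%N -> (m <= n ^ a + a)%N ->
  (4 + 2 * K * m <= n ^ (a + (2 * K * (a + 1) + 4)) + (a + (2 * K * (a + 1) + 4)))%N.
Proof.
move=> n1 hm; set e := (2 * K * (a + 1) + 4)%N.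
have [n_gt1|n_eq1] : (1 < n)%N \/ n = 1%N by lia.
  have e_le : (e <= n ^ e)%N by apply/ltnW/ltn_expl.
  have na : (1 <= n ^ a)%N by rewrite expn_gt0 (leq_trans _ n_gt1).
  rewrite expnD; have := leq_mul (leqnn (n ^ a)) e_le.
  set P := (n ^ a)%N in hm na *; set E := (n ^ e)%N; rewrite /e; nia.
by rewrite n_eq1 exp1n; rewrite n_eq1 exp1n in hm; rewrite /e; nia.
Qed.

Theorem mainTheorem1 :
  forall (R : realType) (d : nat), (1 <= d)%N ->
  forall a : nat, exists b : nat,
  forall (n m : nat), (1 <= n)%N -> (m <= n ^ a + a)%N ->
  forall c : circuit R[i] m n d, valid_circuit c ->
  avg_success c <= (n ^ b + b)%:R / 2%:R ^+ n.
Proof.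
move=> R d _ a; set K := (8 * 2 ^ d * d)%N.
exists (a + (2 * K * (a + 1) + 4))%N => n m n1 hm c c_valid.
apply: avg_success_le => //; apply: leq_trans (poly_bound_arith K n1 hm).
by rewrite /K; lia.
Qed.
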